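(* Let $\mathcal{H}=(V,E)$ be a hypergraph, and consider the mixed integer linear program with variables $w_R\in[0,1]$ for each $R\in E$ and $t_x\in\{0,1\}$ for each $x\in V$: maximize $\sum_{R\in E}w_R$ subject to (a) for all $x\in V$: $\sum_{R\in E: x\in R}w_R\le t_x+(1-t_x)L$; (b) for all $R\in E$: $w_R\le\sum_{x\in R}t_x$; (c) for all $U,W\in E$ and all $y\in U\setminus W$: $w_W\le 1+\sum_{x\in W\setminus U}t_x-t_y$. Then the optimal objective value of this program is $\kappa(\mathcal{H})$.
   Context: $L$ is a fixed large number (large enough that constraint (a) is vacuous when $t_x=0$, e.g. $L\ge|E|$). $\mathcal{H}[S]$ is the hypergraph with vertex set $S$ and edges $\{S\cap e: e\in E, S\cap e\ne\emptyset\}$; $\mathsf{red}$ removes every edge $e$ contained in another edge $e'\ne e$. $\tau^*$ is the value of a maximum fractional edge packing (equivalently, minimum fractional vertex cover). $\kappa(\mathcal{H})=\max_{S\subseteq V}\tau^*(\mathsf{red}(\mathcal{H}[S]))$. *)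

From HB Require Import structures.
From mathcomp Require Import all_boot all_order all_algebra.
From mathcomp Require Import classical_sets reals.
Set Implicit Arguments. Unset Strict Implicit. Unset Printing Implicit Defensive.
Import Order.TTheory GRing.Theory Num.Theory.
Local Open Scope ring_scope.

(* Induced hypergraph H[S]: edges { S ∩ e : e ∈ E, S ∩ e ≠ ∅ }
   (vertex set S; vertices play no role in tau* beyond the edges). *)
Definition induced {V : finType} (E : {set {set V}}) (S : {set V})
  : {set {set V}} :=
  [set S :&: e | e in E & S :&: e != finset.set0].

Definition red {V : finType} (F : {set {set V}}) : {set {set V}} :=
  [set e in F | [forall e' in F, (e' != e) ==> ~~ (e \subset e')]].

Definition frac_packing {R : realType} {V : finType} (F : {set {set V}})
  (y : {set V} -> R) : Prop :=
  (forall e, e \in F -> 0 <= y e) /\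
  (forall v : V, \sum_(e in F | v \in e) y e <= 1).

Definition tau_star {R : realType} {V : finType} (F : {set {set V}}) : R :=
  sup [set (\sum_(e in F) y e) | y in [set y | @frac_packing R V F y]]%classic.

Definition kappa {R : realType} {V : finType} (E : {set {set V}}) : R :=
  \big[Num.max/0]_(S : {set V}) tau_star (red (induced E S)).

Definition milp_feasible {R : realType} {V : finType} (E : {set {set V}})
  (L : R) (w : {set V} -> R) (t : V -> bool) : Prop :=
  (forall e, e \in E -> 0 <= w e <= 1) /\
  (forall x : V, \sum_(e in E | x \in e) w e
                   <= (t x)%:R + (1 - (t x)%:R) * L) /\
  (forall e, e \in E -> w e <= \sum_(x in e) (t x)%:R) /\
  (forall U W, U \in E -> W \in E -> forall y, y \in U :\: W ->
     w W <= 1 + \sum_(x in W :\: U) (t x)%:R - (t y)%:R).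

Definition milp_obj {R : realType} {V : finType} (E : {set {set V}})
  (w : {set V} -> R) : R := \sum_(e in E) w e.

(* Write T for the support of t and read an edge W of H through its trace
   T :&: W. For a feasible (w, t), constraint (b) kills every edge with an empty
   trace and (c) every edge whose trace is strictly contained in another trace,
   so summing w over the edges with a given trace gives a fractional packing of
   red(H[T]) of the same value, by (a); hence the optimum is at most kappa(H).
   Conversely, if S attains kappa(H) and y is an optimal packing of red(H[S])
   (it exists by compactness), put y e on one edge W with S :&: W = e and take
   t the indicator of S: (a) holds off S because L >= |E|, and (c) holds because
   a maximal trace is not contained in the trace of another edge. *)

From HB Require Import structures.
From mathcomp Require Import all_boot all_order all_algebra.
From mathcomp Require Import classical_sets reals topology normedtype derive.
Set Implicit Arguments. Unset Strict Implicit. Unset Printing Implicit Defensive.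
Import Order.TTheory GRing.Theory Num.Theory.
Local Open Scope ring_scope.

Section TauStar.
Variables (R : realType) (V : finType) (F : {set {set V}}).
Hypothesis set0_notin_F : finset.set0 \notin F.

Lemma packing_le1 (y : {set V} -> R) e :
  frac_packing F y -> e \in F -> y e <= 1.
Proof.
move=> [y_ge0 y_le1] eF.
have /set0Pn [v ve] : e != finset.set0 by apply: contraNneq set0_notin_F => <-.
apply: le_trans (y_le1 v); rewrite (bigD1 e) ?eF ?ve //= lerDl.
by apply: sumr_ge0 => e' /andP [/andP [e'F _] _]; exact: y_ge0.
Qed.

Lemma packing_sum_le_tau_star (y : {set V} -> R) :
  frac_packing F y -> \sum_(e in F) y e <= tau_star F.
Proof.
move=> py; apply: ub_le_sup; last by exists y.
exists #|F|%:R => _ [y' py' <-]; rewrite -sumr_const.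
by apply: ler_sum => e eF; exact: packing_le1.
Qed.

Lemma tau_star_ge0 : 0 <= tau_star F :> R.
Proof.
have pack0 : frac_packing F (fun=> 0 : R) by split=> // v; rewrite big1.
by have := packing_sum_le_tau_star pack0; rewrite big1.
Qed.

Import ArrowAsProduct numFieldNormedType.Exports.
Local Open Scope classical_set_scope.

Lemma exists_max_packing :
  exists2 c : {set V} -> R, frac_packing F c &
    forall y, frac_packing F y -> \sum_(e in F) y e <= \sum_(e in F) c e.
Proof.
pose box := [set y : {set V} -> R | forall e, `[0, 1] (y e)].
pose load_le1 := \bigcap_(v in setT)
  (fun y : {set V} -> R => \sum_(e in F | v \in e) y e) @^-1` [set x | x <= 1].
have sum_cont (P : pred {set V}) :
    continuous (fun y : {set V} -> R => \sum_(e | P e) y e).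
  apply: continuous_big => [|e _]; first exact: add_continuous.
  exact: proj_continuous.
have box_compact : compact box.
  by apply: (@tychonoff _ (fun=> R) (fun=> `[0, 1])) => _; exact: segment_compact.
have load_closed : closed load_le1.
  apply: closed_bigI => v _; apply: preimage_closed; last exact: closed_le.
  by move=> y _; exact: sum_cont.
have [|||c] := @compact_EVT_max _ _ (fun y => \sum_(e in F) y e)
    (box `&` load_le1).
- exists (fun=> 0); split=> [e|v _] /=; first by rewrite in_itv /= lexx ler01.
  by rewrite big1.
- exact: compact_closedI.
- by apply: continuous_subspaceT; exact: sum_cont.
rewrite inE => -[c01 c_load] c_max; exists c => [|y py].
  split=> [e _|v]; last exact: c_load.
  by have := c01 e; rewrite /= in_itv /= => /andP [].
(* A packing is unconstrained off [F]; truncating it to 0 there moves it into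
   the compact box without changing its value. *)
pose y0 e := if e \in F then y e else 0.
have -> : \sum_(e in F) y e = \sum_(e in F) y0 e.
  by apply: eq_bigr => e eF; rewrite /y0 eF.
apply: c_max; rewrite inE; split=> [e|v _] /=.
  rewrite /y0 in_itv /=; case: ifP => eF; last by rewrite lexx ler01.
  by rewrite packing_le1 // andbT; case: py => + _; apply.
rewrite (eq_bigr y) => [|e /andP [eF _]]; last by rewrite /y0 eF.
by case: py.
Qed.

Lemma tau_star_attained :
  exists2 y : {set V} -> R, frac_packing F y & \sum_(e in F) y e = tau_star F.
Proof.
have [c pc c_max] := exists_max_packing.
exists c => //; apply/le_anti; rewrite packing_sum_le_tau_star //=.
apply: ge_sup => [|_ [y py <-]]; last exact: c_max.
by exists (\sum_(e in F) c e), c.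
Qed.

End TauStar.

Section InducedHypergraph.
Variables (V : finType) (E : {set {set V}}) (S : {set V}).

Lemma mem_induced W :
  W \in E -> S :&: W != finset.set0 -> S :&: W \in induced E S.
Proof. by move=> WE SWn0; apply: imset_f; rewrite inE WE. Qed.

Lemma inducedP e :
  reflect (exists2 W, W \in E & S :&: W != finset.set0 /\ e = S :&: W)
    (e \in induced E S).
Proof.
apply: (iffP imsetP) => [[W] | [W WE [SWn0 ->]]].
  by rewrite inE => /andP [WE SWn0] ->; exists W.
by exists W; rewrite ?inE ?WE.
Qed.

Lemma set0_notin_red_induced : finset.set0 \notin red (induced E S).
Proof.
rewrite inE negb_and; apply/orP; left.
by apply/inducedP => -[W _ [/eqP SWn0 SW0]]; apply: SWn0.
Qed.

Lemma red_induced_trace e :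
  e \in red (induced E S) -> exists2 W, W \in E & e = S :&: W.
Proof. by rewrite inE => /andP [/inducedP [W WE [_ ->]] _]; exists W. Qed.

Lemma mem_red_induced W :
  W \in E -> S :&: W != finset.set0 ->
  (S :&: W \in red (induced E S)) =
    [forall U in E, (S :&: W \subset U) ==> (S :&: U \subset W)].
Proof.
move=> WE SWn0; rewrite inE mem_induced //.
have subI U : (S :&: W \subset S :&: U) = (S :&: W \subset U).
  by rewrite finset.subsetI subsetIl.
apply/forall_inP/forall_inP => [maxW U UE | maxW _ /inducedP [U UE [_ ->]]].
  apply/implyP => SWU; have [SU0|SUn0] := eqVneq (S :&: U) finset.set0.
    by rewrite SU0 finset.sub0set.
  have /implyP/contraR := maxW _ (mem_induced UE SUn0).
  by rewrite negbK subI => /(_ SWU) /eqP ->; exact: subsetIr.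
apply/implyP => neqUW; apply: contra neqUW; rewrite subI => SWU.
rewrite finset.eqEsubset subI SWU andbT finset.subsetI subsetIl.
exact: (implyP (maxW U UE)).
Qed.

End InducedHypergraph.

Section TraceWeight.
Variables (R : nmodType) (V : finType) (E : {set {set V}}) (S : {set V}).

Definition trace_weight (w : {set V} -> R) (e : {set V}) : R :=
  \sum_(W in E | S :&: W == e) w W.

Lemma sum_trace_weight (F : {set {set V}}) (P : pred {set V})
    (w : {set V} -> R) :
  {in E, forall W, S :&: W \notin F -> w W = 0} ->
  \sum_(W in E | P (S :&: W)) w W = \sum_(e in F | P e) trace_weight w e.
Proof.
move=> w_supp; rewrite (bigID (fun W => S :&: W \in F)) /=.
rewrite [X in _ + X]big1 ?addr0 => [|W /andP [/andP [WE _] SWnF]]; last first.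
  exact: w_supp.
rewrite (partition_big (finset.setI S) (fun e => (e \in F) && P e)) /=.
  apply: eq_bigr => e /andP [eF Pe]; apply: eq_bigl => W.
  by case: eqP => [->|_]; rewrite ?andbF // eF Pe !andbT.
by move=> W /andP [/andP [_ ->] ->].
Qed.

End TraceWeight.

Lemma sum_indicator_ge1 (R : numDomainType) (V : finType) (A : {set V})
    (t : pred V) x :
  x \in A -> t x -> 1 <= \sum_(y in A) (t y)%:R :> R.
Proof.
move=> xA tx; rewrite (bigD1 x) //= tx lerDl.
by apply: sumr_ge0 => y _; exact: ler0n.
Qed.

Section UpperBound.
Variables (R : realType) (V : finType) (E : {set {set V}}) (L : R).
Variables (w : {set V} -> R) (t : V -> bool).
Hypothesis feasible : milp_feasible E L w t.

Let T := [set x | t x].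

Lemma feasible_weight_eq0 W :
  W \in E -> T :&: W \notin red (induced E T) -> w W = 0.
Proof.
case: feasible => w01 [_ [w_le_cover w_le_exchange]] WE TW_nonmax.
apply/le_anti; rewrite (andP (w01 W WE)).1 andbT.
have [TW0|TWn0] := eqVneq (T :&: W) finset.set0.
  apply: le_trans (w_le_cover W WE) _; rewrite big1 // => x xW.
  have : x \notin T :&: W by rewrite TW0 inE.
  by rewrite !inE xW andbT => /negbTE ->.
move: TW_nonmax; rewrite mem_red_induced //.
case/forall_inPn => U UE; rewrite negb_imply => /andP [TWU /subsetPn [z TUz Wz]].
move: TUz; rewrite !inE => /andP [tz Uz].
apply: le_trans (w_le_exchange U W UE WE z _) _; first by rewrite inE Wz Uz.
rewrite tz big1 ?addr0 ?subrr // => x; rewrite inE => /andP [Ux Wx].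
apply/eqP; rewrite pnatr_eq0 eqb0; apply: contra Ux => tx.
by apply: (fintype.subsetP TWU); rewrite !inE tx Wx.
Qed.

Lemma trace_weight_packing :
  frac_packing (red (induced E T)) (trace_weight E T w).
Proof.
case: feasible => w01 [w_le_load _].
split=> [e _|v].
  by apply: sumr_ge0 => W /andP [WE _]; case/andP: (w01 W WE).
rewrite -(sum_trace_weight (fun e => v \in e)); last exact: feasible_weight_eq0.
case tv: (t v); last by rewrite big1 ?ler01 // => W /andP [_]; rewrite !inE tv.
under eq_bigl do rewrite !inE tv.
by have := w_le_load v; rewrite tv subrr mul0r addr0.
Qed.

Lemma milp_obj_le_kappa : milp_obj E w <= kappa E.
Proof.
have := sum_trace_weight predT feasible_weight_eq0.
under eq_bigl do rewrite andbT; under [X in _ = X]eq_bigl do rewrite andbT.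
rewrite /milp_obj => ->.
have := packing_sum_le_tau_star (set0_notin_red_induced E T) trace_weight_packing.
move/le_trans; apply.
exact: (@le_bigmax _ R _ 0 (fun S => tau_star (red (induced E S))) T).
Qed.

End UpperBound.

Section LowerBound.
Variables (R : realType) (V : finType) (E : {set {set V}}) (S : {set V}).
Variable y : {set V} -> R.
Hypothesis y_packing : frac_packing (red (induced E S)) y.

Let F := red (induced E S).

Definition trace_representative (e : {set V}) : option {set V} :=
  [pick W in E | S :&: W == e].

Definition representative_weight (W : {set V}) : R :=
  if (S :&: W \in F) && (trace_representative (S :&: W) == Some W)
  then y (S :&: W) else 0.

Lemma trace_representativeP e :
  e \in F -> exists2 W, trace_representative e = Some W & W \in E /\ S :&: W = e.
Proof.
move=> eF; rewrite /trace_representative.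
case: pickP => [W /andP [WE /eqP SW] | none]; first by exists W.
have [W WE eSW] := red_induced_trace eF.
by have := none W; rewrite WE eSW eqxx.
Qed.

Lemma representative_weight01 W : 0 <= representative_weight W <= 1.
Proof.
rewrite /representative_weight; case: ifP => [/andP [SWF _] | _]; last first.
  by rewrite lexx ler01.
rewrite (packing_le1 (set0_notin_red_induced E S) y_packing SWF) andbT.
by case: y_packing => + _; apply.
Qed.

Lemma trace_representative_weight e :
  e \in F -> trace_weight E S representative_weight e = y e.
Proof.
move=> eF; have [W0 repW0 [W0E SW0]] := trace_representativeP eF.
rewrite /trace_weight (bigD1 W0) /=; last by rewrite W0E SW0 eqxx.
rewrite /representative_weight SW0 eF repW0 eqxx big1 ?addr0 //.
move=> W /andP [/andP [_ /eqP ->] W_neq]; rewrite eF repW0 /=.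
by case: eqP => // -[W0W]; rewrite W0W eqxx in W_neq.
Qed.

Lemma sum_representative_weight (P : pred {set V}) :
  \sum_(W in E | P (S :&: W)) representative_weight W = \sum_(e in F | P e) y e.
Proof.
rewrite (sum_trace_weight (F := F)) => [|W _ SWnF]; last first.
  by rewrite /representative_weight (negbTE SWnF).
by apply: eq_bigr => e /andP [eF _]; exact: trace_representative_weight.
Qed.

Lemma representative_weight_support W :
  representative_weight W != 0 -> S :&: W \in F.
Proof.
by rewrite /representative_weight; case: ifP => [/andP []|]; rewrite ?eqxx.
Qed.

Lemma representative_weight_le_trace W :
  representative_weight W <= \sum_(x in W) (x \in S)%:R.
Proof.
have [->|/representative_weight_support SWF] :=
  eqVneq (representative_weight W) 0.
  by apply: sumr_ge0 => x _; exact: ler0n.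
have /set0Pn [v] : S :&: W != finset.set0.
  by apply: contraNneq (set0_notin_red_induced E S) => <-.
rewrite finset.in_setI => /andP [vS vW].
apply: le_trans (sum_indicator_ge1 _ vW vS).
by case/andP: (representative_weight01 W).
Qed.

Lemma representative_weight_le_exchange U W z :
  U \in E -> W \in E -> z \in U :\: W ->
  representative_weight W <= 1 + \sum_(x in W :\: U) (x \in S)%:R - (z \in S)%:R.
Proof.
move=> UE WE; rewrite finset.in_setD => /andP [Wz Uz].
have [w_le1 sum_ge0] : representative_weight W <= 1 /\
    0 <= \sum_(x in W :\: U) (x \in S)%:R :> R.
  by split; [case/andP: (representative_weight01 W) | apply: sumr_ge0].
case: (boolP (z \in S)) => zS /=; last by rewrite subr0 ler_wpDr.
rewrite addrAC subrr add0r.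
have [->//|/representative_weight_support SWF] :=
  eqVneq (representative_weight W) 0.
have SWn0 : S :&: W != finset.set0.
  by apply: contraNneq (set0_notin_red_induced E S) => <-.
move: SWF; rewrite mem_red_induced // => /forall_inP /(_ U UE) /implyP SW_SU.
have /subsetPn [x] : ~~ (S :&: W \subset U).
  apply: contra Wz => /SW_SU /fintype.subsetP; apply.
  by rewrite finset.in_setI zS.
rewrite finset.in_setI => /andP [xS xW] Ux.
apply: le_trans w_le1 (sum_indicator_ge1 _ _ xS).
by rewrite finset.in_setD Ux.
Qed.

Lemma representative_weight_feasible L :
  #|E|%:R <= L -> milp_feasible E L representative_weight (fun x => x \in S).
Proof.
move=> EL; split; first by move=> W _; exact: representative_weight01.
split.
  move=> x /=; case: (boolP (x \in S)) => xS; rewrite /= ?subrr ?mul0r ?addr0.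
    rewrite (eq_bigl (fun W => (W \in E) && (x \in S :&: W))) => [|W].
      by rewrite (sum_representative_weight (fun e => x \in e)); case: y_packing.
    by rewrite finset.in_setI xS.
  rewrite subr0 mul1r add0r; apply: le_trans EL; rewrite -sumr_const.
  rewrite big_mkcondr /=; apply: ler_sum => W _.
  by case: ifP; rewrite ?ler01 // => _; case/andP: (representative_weight01 W).
split=> [W _|U W UE WE z]; first exact: representative_weight_le_trace.
exact: representative_weight_le_exchange.
Qed.

End LowerBound.

Theorem theoremA2 (R : realType) (V : finType) (E : {set {set V}}) (L : R)
  (hL : (#|E|%:R : R) <= L) :
  (exists (w : {set V} -> R) (t : V -> bool),
      milp_feasible E L w t /\ milp_obj E w = kappa E) /\
  (forall (w : {set V} -> R) (t : V -> bool),
      milp_feasible E L w t -> milp_obj E w <= kappa E).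
Proof.
split=> [|w t]; last exact: milp_obj_le_kappa.
have [S _ kappaE] := @eq_bigmax _ R _ 0 finset.set0 predT
  (fun S => tau_star (red (induced E S))) isT
  (fun S _ => tau_star_ge0 R (set0_notin_red_induced E S)).
have [y y_packing y_sum] := tau_star_attained R (set0_notin_red_induced E S).
exists (representative_weight E S y), (fun x => x \in S).
split; first exact: representative_weight_feasible.
have := sum_representative_weight E S y predT.
under eq_bigl do rewrite andbT; under [X in _ = X]eq_bigl do rewrite andbT.
by rewrite /milp_obj /kappa kappaE y_sum.
Qed.
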